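(* For each $n\geq1$ the map $\tilde T_n$ is Markov. For $n=1$ a Markov partition is $\{(0,\kappa_1),(\kappa_1,\tfrac12),(\tfrac12,1-\kappa_1),(1-\kappa_1,1)\}$, and for $n\geq2$ a Markov partition consists of the intervals $(0,\kappa_n)$, $(\kappa_n,\tfrac12-\tfrac{\kappa_n}{2(1+\kappa_n)})$, $(\tfrac12-\tfrac{\kappa_n}{2(1+\kappa_n)},\tfrac12)$, $(\tfrac12,\tfrac12+\tfrac{\kappa_n}{2(1+\kappa_n)})$; $(\tilde T_n^{i+1}(\kappa_n),\tilde T_n^i(\kappa_n))$ for $1\le i\le n-2$; and $(\tilde T_n(\kappa_n),1)$. In all cases the Markov partition has $n+3$ intervals.
   Context: For $\kappa\in(0,1/2)$, the paired tent map $T_\kappa:[-1,1]\to[-1,1]$ is $T_\kappa(x)=2(1+\kappa)(x+1)-1$ for $x\in[-1,-1/2]$, $T_\kappa(x)=-2(1+\kappa)x-1$ for $x\in[-1/2,0)$, $T_\kappa(0)=0$, $T_\kappa(x)=-2(1+\kappa)x+1$ for $x\in(0,1/2]$, $T_\kappa(x)=2(1+\kappa)(x-1)+1$ for $x\in[1/2,1]$. For $n\geq1$, $\kappa_n$ is the unique solution in $(0,1/2)$ of $(2+2\kappa)^n\kappa=1$, and $\tilde T_n:[0,1]\to[0,1]$ is $\tilde T_n(x)=|T_{\kappa_n}(x)|$. A map $T$ of an interval $I$ is Markov if there is a finite collection $\{R_i\}_{i=1}^r$ of disjoint open intervals (a Markov partition) such that $I\setminus\bigcup_iR_i$ is exactly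 the set of endpoints of the $R_i$, and whenever $R_i\cap T(R_j)\neq\emptyset$, we have $R_i\subset T(R_j)$. *)

From Stdlib Require Import Reals Lra Lia List.
Import ListNotations.
Open Scope R_scope.

(* The paired tent map T_kappa on [-1,1] (values outside [-1,1] are irrelevant). *)
Definition T (k x : R) : R :=
  if Rle_dec x (-1/2) then 2*(1+k)*(x+1) - 1
  else if Rlt_dec x 0 then -2*(1+k)*x - 1
  else if Req_EM_T x 0 then 0
  else if Rle_dec x (1/2) then -2*(1+k)*x + 1
  else 2*(1+k)*(x-1) + 1.

Definition Ttilde (k x : R) : R := Rabs (T k x).

Fixpoint iterR (f : R -> R) (m : nat) (x : R) : R :=
  match m with O => x | S m' => f (iterR f m' x) end.

(* An open interval is represented by the pair of its endpoints (a,b), a < b. *)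
Definition in_open (p : R * R) (x : R) : Prop := fst p < x < snd p.

Definition markov_partition (a b : R) (f : R -> R) (P : list (R * R)) : Prop :=
  (forall p, In p P -> a <= fst p /\ fst p < snd p /\ snd p <= b) /\
  (forall i j, (i < length P)%nat -> (j < length P)%nat -> i <> j ->
     forall x, ~ (in_open (nth i P (0,0)) x /\ in_open (nth j P (0,0)) x)) /\
  (forall x, a <= x <= b ->
     ((~ exists p, In p P /\ in_open p x) <->
      (exists p, In p P /\ (x = fst p \/ x = snd p)))) /\
  (forall x, (exists p, In p P /\ (x = fst p \/ x = snd p)) -> a <= x <= b) /\
  (forall p q, In p P -> In q P ->
     (exists x, in_open p x /\ exists y, in_open q y /\ f y = x) ->
     forall x, in_open p x -> exists y, in_open q y /\ f y = x).

Definition is_markov (a b : R) (f : R -> R) : Prop :=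
  exists P, markov_partition a b f P.

Definition paper_partition (n : nat) (k : R) : list (R * R) :=
  let c := k / (2 * (1 + k)) in
  if Nat.eqb n 1 then
    [(0, k); (k, 1/2); (1/2, 1 - k); (1 - k, 1)]
  else
    [(0, k); (k, 1/2 - c); (1/2 - c, 1/2); (1/2, 1/2 + c)]
    ++ map (fun i => (iterR (Ttilde k) (i+1) k, iterR (Ttilde k) i k)) (seq 1 (n - 2))
    ++ [(Ttilde k k, 1)].

(* Write s = 2(1+κ).  T̃_n(x) is |1 - s x| on (0,1/2] and |1 - s (1-x)| on (1/2,1], so it is
   affine with slope ±s between consecutive points of {0, 1/s, 1/2, 1 - 1/s, 1}.  The orbit of
   κ descends from near 1 to 0: T̃^j(κ) = 1 - κ s^j for 1 <= j <= n, because κ s^n = 1; this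
   also gives κ s^(n-1) = 1/s = 1/2 - κ/(2(1+κ)).  So the proposed intervals are exactly the
   gaps between consecutive points of 0 < κ < 1/s < 1/2 < T̃^(n-1)(κ) < ... < T̃(κ) < 1 (for
   n = 1, of 0 < κ < 1/2 < 1 - κ < 1), and T̃ maps each gap affinely onto the open interval
   between two of these points.  For the gaps of a finite set of points, that is the Markov
   property. *)

From Stdlib Require Import Reals Lra Lia List Sorted Permutation.
Import ListNotations.
Open Scope R_scope.

Fixpoint gaps (l : list R) : list (R * R) :=
  match l with
  | x :: ((y :: _) as t) => (x, y) :: gaps t
  | _ => []
  end.

Lemma gaps_cons x y t : gaps (x :: y :: t) = (x, y) :: gaps (y :: t).
Proof. reflexivity. Qed.

Lemma gaps_endpoints_in l p : In p (gaps l) -> In (fst p) l /\ In (snd p) l.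
Proof.
  induction l as [|x [|y t] IH]; [easy|easy|].
  rewrite gaps_cons. intros [<-|Hp]; [simpl; tauto|].
  destruct (IH Hp); split; right; assumption.
Qed.

Lemma gaps_fst_lt_snd l p : Sorted Rlt l -> In p (gaps l) -> fst p < snd p.
Proof.
  induction l as [|x [|y t] IH]; [easy|easy|].
  rewrite gaps_cons. intros Hl [<-|Hp].
  - inversion Hl as [|? ? _ Hxy]; inversion Hxy; assumption.
  - inversion Hl; auto.
Qed.

Lemma gaps_point_outside l c p :
  StronglySorted Rlt l -> In c l -> In p (gaps l) -> snd p <= c \/ c <= fst p.
Proof.
  induction l as [|x [|y t] IH]; [easy|easy|].
  rewrite gaps_cons. intros Hl Hc Hp.
  apply StronglySorted_inv in Hl as [Hyt Hx]. rewrite Forall_forall in Hx.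
  destruct Hp as [<-|Hp]; simpl.
  - destruct Hc as [<-|[<-|Hc]]; [lra|lra|].
    apply StronglySorted_inv in Hyt as [_ Hy]. rewrite Forall_forall in Hy.
    left; apply Rlt_le, Hy, Hc.
  - destruct Hc as [<-|Hc]; [|exact (IH Hyt Hc Hp)].
    right; apply Rlt_le, Hx, (gaps_endpoints_in _ _ Hp).
Qed.

Lemma gaps_overlap_eq l p q x :
  StronglySorted Rlt l -> In p (gaps l) -> In q (gaps l) ->
  in_open p x -> in_open q x -> p = q.
Proof.
  intros Hl Hp Hq Hpx Hqx.
  destruct (gaps_endpoints_in _ _ Hp) as [Hp1 Hp2].
  destruct (gaps_endpoints_in _ _ Hq) as [Hq1 Hq2].
  pose proof (gaps_point_outside _ _ _ Hl Hp1 Hq).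
  pose proof (gaps_point_outside _ _ _ Hl Hp2 Hq).
  pose proof (gaps_point_outside _ _ _ Hl Hq1 Hp).
  pose proof (gaps_point_outside _ _ _ Hl Hq2 Hp).
  destruct p as [a b], q as [c d]; unfold in_open in *; simpl in *.
  f_equal; lra.
Qed.

Lemma gaps_NoDup l : StronglySorted Rlt l -> NoDup (gaps l).
Proof.
  induction l as [|x [|y t] IH]; intros Hl; [constructor|constructor|].
  rewrite gaps_cons.
  apply StronglySorted_inv in Hl as [Hyt Hx]. rewrite Forall_forall in Hx.
  constructor; [|exact (IH Hyt)].
  intros Hxy. apply (Rlt_irrefl x), Hx, (gaps_endpoints_in _ _ Hxy).
Qed.

Lemma gaps_cover l a b x :
  StronglySorted Rlt l -> In a l -> In b l -> a <= x <= b ->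
  In x l \/ exists p, In p (gaps l) /\ in_open p x.
Proof.
  revert a. induction l as [|x0 [|y t] IH]; intros a Hl Ha Hb Hx; [easy| |].
  - left; destruct Ha as [<-|[]], Hb as [<-|[]]; left; lra.
  - rewrite gaps_cons.
    apply StronglySorted_inv in Hl as [Hyt Hx0]. rewrite Forall_forall in Hx0.
    assert (Hlo : x0 <= x).
    { destruct Ha as [<-|Ha]; [lra|]. specialize (Hx0 a Ha); lra. }
    destruct (Req_dec x x0) as [->|Hne]; [left; now left|].
    destruct (Rlt_le_dec x y) as [Hxy|Hyx].
    + right; exists (x0, y); split; [now left|unfold in_open; simpl; lra].
    + assert (Hb' : In b (y :: t)).
      { destruct Hb as [<-|Hb]; [|exact Hb].
        specialize (Hx0 y (or_introl eq_refl)); lra. }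
      destruct (IH y Hyt (or_introl eq_refl) Hb' ltac:(lra)) as [H|[p [Hp Hpx]]].
      * left; now right.
      * right; exists p; split; [now right|exact Hpx].
Qed.

Lemma point_is_gaps_endpoint l x z :
  In x l -> In z l -> x <> z -> exists p, In p (gaps l) /\ (x = fst p \/ x = snd p).
Proof.
  revert z. induction l as [|x0 [|y t] IH]; intros z Hx Hz Hxz; [easy| |].
  - destruct Hx as [<-|[]], Hz as [<-|[]]; tauto.
  - rewrite gaps_cons.
    destruct Hx as [->|Hx]; [exists (x, y); simpl; tauto|].
    destruct (Req_dec x y) as [->|Hxy]; [exists (x0, y); simpl; tauto|].
    destruct (IH y Hx (or_introl eq_refl) Hxy) as [p [Hp Hxp]].
    exists p; split; [now right|exact Hxp].
Qed.

Lemma gaps_complement l a b x :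
  StronglySorted Rlt l -> In a l -> In b l -> a <> b -> a <= x <= b ->
  (~ exists p, In p (gaps l) /\ in_open p x) <->
  (exists p, In p (gaps l) /\ (x = fst p \/ x = snd p)).
Proof.
  intros Hl Ha Hb Hab Hx; split.
  - intros Hnot.
    destruct (gaps_cover l a b x Hl Ha Hb Hx) as [Hxin|Hopen]; [|contradiction].
    destruct (Req_dec x a) as [->|Hxa].
    + exact (point_is_gaps_endpoint l a b Hxin Hb Hab).
    + exact (point_is_gaps_endpoint l x a Hxin Ha Hxa).
  - intros [p [Hp Hxp]] [q [Hq Hqx]].
    destruct (gaps_endpoints_in l p Hp) as [H1 H2].
    pose proof (gaps_point_outside l _ q Hl H1 Hq).
    pose proof (gaps_point_outside l _ q Hl H2 Hq).
    unfold in_open in Hqx; destruct Hxp as [-> | ->]; lra.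
Qed.

Definition maps_onto (f : R -> R) (p q : R * R) : Prop :=
  (forall y, in_open p y -> in_open q (f y)) /\
  (forall x, in_open q x -> exists y, in_open p y /\ f y = x).

Lemma markov_partition_of_points (a b : R) (f : R -> R) (pts : list R) (P : list (R * R)) :
  a < b -> Sorted Rlt pts -> In a pts -> In b pts -> (forall x, In x pts -> a <= x <= b) ->
  Permutation P (gaps pts) ->
  (forall q, In q P -> exists c d, In c pts /\ In d pts /\ maps_onto f q (c, d)) ->
  markov_partition a b f P.
Proof.
  intros Hab Hsorted Ha Hb Hbound HP Himage.
  pose proof (Sorted_StronglySorted Rlt_trans Hsorted) as Hl.
  assert (HinP : forall p, In p P <-> In p (gaps pts))
    by (intros p; split; apply Permutation_in; [|symmetry]; exact HP).
  assert (Hcut : forall c p, In c pts -> In p P -> ~ in_open p c).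
  { intros c p Hc Hp Hcp. apply HinP in Hp.
    destruct (gaps_point_outside _ _ _ Hl Hc Hp); unfold in_open in Hcp; lra. }
  split; [|split; [|split; [|split]]].
  - intros p Hp. apply HinP in Hp.
    destruct (gaps_endpoints_in _ _ Hp) as [H1 H2].
    pose proof (gaps_fst_lt_snd _ _ Hsorted Hp).
    pose proof (Hbound _ H1); pose proof (Hbound _ H2); lra.
  - intros i j Hi Hj Hij x [Hix Hjx]. apply Hij.
    assert (HND : NoDup P)
      by (apply (Permutation_NoDup (Permutation_sym HP)), gaps_NoDup, Hl).
    apply (proj1 (NoDup_nth P (0, 0)) HND i j Hi Hj).
    apply (gaps_overlap_eq pts _ _ x Hl); try apply HinP, nth_In; assumption.
  - intros x Hx; setoid_rewrite HinP.
    apply (gaps_complement pts a b x Hl Ha Hb); lra || assumption.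
  - intros x [p [Hp Hxp]].
    destruct (gaps_endpoints_in pts p) as [H1 H2]; [apply HinP, Hp|].
    destruct Hxp as [-> | ->]; apply Hbound; assumption.
  - intros p q Hp Hq [x [Hpx [y [Hqy Hfy]]]] x' Hpx'.
    destruct (Himage q Hq) as [c [d [Hc [Hd [Hinto Honto]]]]].
    apply Honto.
    pose proof (Hinto y Hqy) as Hcd. rewrite Hfy in Hcd.
    pose proof (Hcut c p Hc Hp); pose proof (Hcut d p Hd Hp).
    destruct p as [p1 p2]; unfold in_open in *; simpl in *; lra.
Qed.

Lemma maps_onto_affine_increasing f (alpha beta a b c d : R) :
  0 < beta -> (forall y, a < y < b -> f y = alpha + beta * y) ->
  c = alpha + beta * a -> d = alpha + beta * b -> maps_onto f (a, b) (c, d).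
Proof.
  intros Hbeta Hf -> ->; unfold maps_onto, in_open; simpl; split.
  - intros y Hy; rewrite (Hf y Hy).
    destruct Hy; split; apply Rplus_lt_compat_l, Rmult_lt_compat_l; lra.
  - intros x Hx; exists ((x - alpha) / beta).
    assert (Hy : beta * ((x - alpha) / beta) = x - alpha) by (field; lra).
    assert (a < (x - alpha) / beta < b) by nra.
    split; [assumption|rewrite Hf by assumption; lra].
Qed.

Lemma maps_onto_affine_decreasing f (alpha beta a b c d : R) :
  beta < 0 -> (forall y, a < y < b -> f y = alpha + beta * y) ->
  c = alpha + beta * b -> d = alpha + beta * a -> maps_onto f (a, b) (c, d).
Proof.
  intros Hbeta Hf -> ->; unfold maps_onto, in_open; simpl; split.
  - intros y Hy; rewrite (Hf y Hy).
    destruct Hy; split; apply Rplus_lt_compat_l, Rmult_lt_gt_compat_neg_l; lra.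
  - intros x Hx; exists ((x - alpha) / beta).
    assert (Hy : beta * ((x - alpha) / beta) = x - alpha) by (field; lra).
    assert (a < (x - alpha) / beta < b) by nra.
    split; [assumption|rewrite Hf by assumption; lra].
Qed.

Definition slope (k : R) : R := 2 * (1 + k).

Lemma Ttilde_left k y : 0 < y <= 1/2 -> Ttilde k y = Rabs (1 - slope k * y).
Proof.
  intros Hy; unfold Ttilde, T, slope.
  destruct (Rle_dec y (-1/2)); [lra|].
  destruct (Rlt_dec y 0); [lra|].
  destruct (Req_EM_T y 0); [lra|].
  destruct (Rle_dec y (1/2)); [f_equal; ring|lra].
Qed.

Lemma Ttilde_right k y : 1/2 < y -> Ttilde k y = Rabs (1 - slope k * (1 - y)).
Proof.
  intros Hy; unfold Ttilde, T, slope.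
  destruct (Rle_dec y (-1/2)); [lra|].
  destruct (Rlt_dec y 0); [lra|].
  destruct (Req_EM_T y 0); [lra|].
  destruct (Rle_dec y (1/2)); [lra|f_equal; ring].
Qed.

Section Branches.
Variables (k a b c d : R).
Hypotheses (Hk : 0 < k) (Hab : a < b).

Lemma Ttilde_onto_left_falling :
  0 <= a -> slope k * b <= 1 ->
  c = 1 - slope k * b -> d = 1 - slope k * a -> maps_onto (Ttilde k) (a, b) (c, d).
Proof.
  intros Ha Hb Hc Hd;
    apply maps_onto_affine_decreasing with (alpha := 1) (beta := - slope k);
    unfold slope in *; try lra.
  intros y Hy; rewrite Ttilde_left, Rabs_pos_eq; unfold slope; nra.
Qed.

Lemma Ttilde_onto_left_rising :
  b <= 1/2 -> 1 <= slope k * a ->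
  c = slope k * a - 1 -> d = slope k * b - 1 -> maps_onto (Ttilde k) (a, b) (c, d).
Proof.
  intros Hb Ha Hc Hd;
    apply maps_onto_affine_increasing with (alpha := -1) (beta := slope k);
    unfold slope in *; try lra.
  intros y Hy; rewrite Ttilde_left, Rabs_left1; unfold slope; nra.
Qed.

Lemma Ttilde_onto_right_falling :
  1/2 <= a -> 1 <= slope k * (1 - b) ->
  c = slope k * (1 - b) - 1 -> d = slope k * (1 - a) - 1 -> maps_onto (Ttilde k) (a, b) (c, d).
Proof.
  intros Ha Hb Hc Hd;
    apply maps_onto_affine_decreasing with (alpha := slope k - 1) (beta := - slope k);
    unfold slope in *; try lra.
  intros y Hy; rewrite Ttilde_right, Rabs_left1; unfold slope; nra.
Qed.

Lemma Ttilde_onto_right_rising :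
  b <= 1 -> slope k * (1 - a) <= 1 ->
  c = 1 - slope k * (1 - a) -> d = 1 - slope k * (1 - b) -> maps_onto (Ttilde k) (a, b) (c, d).
Proof.
  intros Hb Ha Hc Hd;
    apply maps_onto_affine_increasing with (alpha := 1 - slope k) (beta := slope k);
    unfold slope in *; try lra.
  intros y Hy; rewrite Ttilde_right, Rabs_pos_eq; unfold slope; nra.
Qed.

End Branches.

Definition delta (k : R) (j : nat) : R := k * slope k ^ j.

Definition orbit_gap (k : R) (i : nat) : R * R := (1 - delta k (S i), 1 - delta k i).

Lemma delta_0 k : delta k 0 = k.
Proof. unfold delta; ring. Qed.

Lemma delta_S k j : delta k (S j) = slope k * delta k j.
Proof. unfold delta; simpl; ring. Qed.

Lemma delta_pos k j : 0 < k -> 0 < delta k j.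
Proof. intros Hk; apply Rmult_lt_0_compat, pow_lt; unfold slope; lra. Qed.

Lemma delta_lt k i j : 0 < k -> (i < j)%nat -> delta k i < delta k j.
Proof. intros Hk Hij; apply Rmult_lt_compat_l, Rlt_pow; unfold slope; lra || assumption. Qed.

Section Orbit.
Variables (k : R) (n : nat).
Hypotheses (Hk : 0 < k) (Hkn : (2 + 2 * k) ^ n * k = 1).

Lemma delta_n : delta k n = 1.
Proof.
  unfold delta, slope; replace (2 * (1 + k)) with (2 + 2 * k) by ring.
  rewrite Rmult_comm; exact Hkn.
Qed.

Lemma delta_le_one j : (j <= n)%nat -> delta k j <= 1.
Proof.
  intros Hj; rewrite <- delta_n.
  destruct (Nat.eq_dec j n) as [->|Hne]; [lra|apply Rlt_le, delta_lt; lia || assumption].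
Qed.

Lemma delta_lt_half j : (j < n)%nat -> delta k j < 1/2.
Proof.
  intros Hj; pose proof (delta_le_one (S j) Hj) as H; rewrite delta_S in H.
  pose proof (delta_pos k j Hk); unfold slope in H; nra.
Qed.

Lemma iter_Ttilde_kappa j : (1 <= j <= n)%nat -> iterR (Ttilde k) j k = 1 - delta k j.
Proof.
  induction j as [|j IH]; intros Hj; [lia|].
  pose proof (delta_le_one (S j) ltac:(lia)) as Hle; rewrite delta_S in *.
  destruct (Nat.eq_dec j 0) as [->|Hj0]; simpl iterR.
  - pose proof (delta_lt_half 0 ltac:(lia)); rewrite delta_0 in *.
    rewrite Ttilde_left, Rabs_pos_eq; lra.
  - pose proof (delta_lt_half j ltac:(lia)); pose proof (delta_pos k j Hk).
    rewrite IH, Ttilde_right, Rabs_pos_eq by (lia || lra); lra.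
Qed.

Lemma Ttilde_onto_orbit_gap i : (S (S i) <= n)%nat ->
  maps_onto (Ttilde k) (orbit_gap k i) (orbit_gap k (S i)).
Proof.
  intros Hi.
  pose proof (delta_le_one (S (S i)) Hi).
  pose proof (delta_lt k i (S i) Hk ltac:(lia)).
  pose proof (delta_pos k i Hk).
  pose proof (delta_S k (S i)); pose proof (delta_S k i).
  apply Ttilde_onto_right_rising; lra.
Qed.

End Orbit.

Fixpoint orbit_points (k : R) (m : nat) : list R :=
  match m with
  | O => [1]
  | S m' => 1 - delta k m :: orbit_points k m'
  end.

Lemma in_orbit_points k m x :
  In x (orbit_points k m) <-> x = 1 \/ exists j, (1 <= j <= m)%nat /\ x = 1 - delta k j.
Proof.
  induction m as [|m IH]; simpl.
  - split; [intros [<-|[]]; now left|intros [<-|[j [Hj _]]]; [now left|lia]].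
  - rewrite IH; split.
    + intros [<-|[->|[j [Hj ->]]]]; [|now left|];
        right; [exists (S m)|exists j]; split; reflexivity || lia.
    + intros [->|[j [Hj ->]]]; [tauto|].
      destruct (Nat.eq_dec j (S m)) as [->|Hne]; [now left|].
      right; right; exists j; split; [lia|reflexivity].
Qed.

Lemma orbit_points_sorted k m : 0 < k -> Sorted Rlt (orbit_points k m).
Proof.
  intros Hk; induction m as [|m IH]; [repeat constructor|].
  constructor; [exact IH|].
  destruct m as [|m]; constructor.
  - pose proof (delta_pos k 1 Hk); lra.
  - pose proof (delta_lt k (S m) (S (S m)) Hk ltac:(lia)); lra.
Qed.

Lemma gaps_orbit_points k m :
  gaps (orbit_points k (S m)) =
  rev (map (orbit_gap k) (seq 1 m)) ++ [(1 - delta k 1, 1)].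
Proof.
  induction m as [|m IH]; [reflexivity|].
  transitivity ((1 - delta k (S (S m)), 1 - delta k (S m)) :: gaps (orbit_points k (S m)));
    [reflexivity|].
  rewrite IH, seq_S, map_app, rev_app_distr. reflexivity.
Qed.

Lemma markov_paper_partition_one k :
  0 < k < 1/2 -> (2 + 2 * k) ^ 1 * k = 1 ->
  markov_partition 0 1 (Ttilde k) (paper_partition 1 k).
Proof.
  intros Hk Hkn.
  assert (Hs : slope k * k = 1) by (unfold slope; lra).
  apply markov_partition_of_points with (pts := [0; k; 1/2; 1 - k; 1]).
  - lra.
  - repeat constructor; lra.
  - simpl; tauto.
  - simpl; tauto.
  - intros x Hx; repeat destruct Hx as [<-|Hx]; lra || contradiction.
  - apply Permutation_refl.
  - intros q Hq; repeat destruct Hq as [<-|Hq]; try contradiction.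
    + exists 0, 1; split; [simpl; tauto|split; [simpl; tauto|]].
      apply Ttilde_onto_left_falling; lra.
    + exists 0, k; split; [simpl; tauto|split; [simpl; tauto|]].
      apply Ttilde_onto_left_rising; unfold slope in *; lra.
    + exists 0, k; split; [simpl; tauto|split; [simpl; tauto|]].
      apply Ttilde_onto_right_falling; unfold slope in *; lra.
    + exists 0, 1; split; [simpl; tauto|split; [simpl; tauto|]].
      apply Ttilde_onto_right_rising; unfold slope in *; lra.
Qed.

Section LargePartition.
Variables (k : R) (m : nat).
Hypotheses (Hk : 0 < k) (Hkn : (2 + 2 * k) ^ S (S m) * k = 1).

Let points : list R := 0 :: k :: / slope k :: 1/2 :: orbit_points k (S m).

Lemma delta_pred : delta k (S m) = / slope k.
Proof.
  pose proof (delta_n k _ Hkn) as H; rewrite delta_S in H.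
  assert (Hs : slope k <> 0) by (unfold slope; lra).
  apply (Rmult_eq_reg_l (slope k)); [rewrite H; field|]; assumption.
Qed.

Lemma inv_slope_between : k < / slope k < 1/2.
Proof.
  rewrite <- delta_pred; split.
  - rewrite <- (delta_0 k) at 1; apply delta_lt; lia || assumption.
  - apply (delta_lt_half k _ Hk Hkn); lia.
Qed.

Lemma paper_partition_large :
  paper_partition (S (S m)) k =
  [(0, k); (k, / slope k); (/ slope k, 1/2); (1/2, 1 - / slope k)]
  ++ map (orbit_gap k) (seq 1 m) ++ [(1 - delta k 1, 1)].
Proof.
  unfold paper_partition; simpl Nat.eqb; cbv zeta; replace (S (S m) - 2)%nat with m by lia.
  replace (1/2 - k / (2 * (1 + k))) with (/ slope k) by (unfold slope; field; lra).
  replace (1/2 + k / (2 * (1 + k))) with (1 - / slope k) by (unfold slope; field; lra).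
  change (Ttilde k k) with (iterR (Ttilde k) 1 k).
  rewrite (iter_Ttilde_kappa k (S (S m)) Hk Hkn 1) by lia.
  do 2 f_equal. apply map_ext_in; intros i Hi; apply in_seq in Hi.
  unfold orbit_gap; rewrite !(iter_Ttilde_kappa k (S (S m)) Hk Hkn), Nat.add_1_r by lia.
  reflexivity.
Qed.

Lemma paper_partition_large_perm_gaps :
  Permutation (paper_partition (S (S m)) k) (gaps points).
Proof.
  rewrite paper_partition_large.
  change (gaps points) with
    ([(0, k); (k, / slope k); (/ slope k, 1/2); (1/2, 1 - delta k (S m))]
     ++ gaps (orbit_points k (S m))).
  rewrite delta_pred, gaps_orbit_points.
  apply Permutation_app_head, Permutation_app_tail, Permutation_rev.
Qed.

Lemma large_points_sorted : Sorted Rlt points.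
Proof.
  pose proof inv_slope_between.
  repeat (apply Sorted_cons; [|constructor; rewrite ?delta_pred; lra]).
  apply orbit_points_sorted, Hk.
Qed.

Lemma large_points_bounds x : In x points -> 0 <= x <= 1.
Proof.
  pose proof inv_slope_between.
  intros [<-|[<-|[<-|[<-|Hx]]]]; try lra.
  apply in_orbit_points in Hx as [->|[j [Hj ->]]]; [lra|].
  pose proof (delta_pos k j Hk); pose proof (delta_le_one k _ Hk Hkn j ltac:(lia)); lra.
Qed.

Lemma orbit_point_in_large_points j : (1 <= j <= S (S m))%nat -> In (1 - delta k j) points.
Proof.
  intros Hj; destruct (Nat.eq_dec j (S (S m))) as [->|Hne].
  - left; rewrite (delta_n k _ Hkn); ring.
  - do 4 right; apply in_orbit_points; right; exists j; split; [lia|reflexivity].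
Qed.

Lemma one_in_large_points : In 1 points.
Proof. do 4 right; apply in_orbit_points; now left. Qed.

Lemma Ttilde_maps_large_partition q : In q (paper_partition (S (S m)) k) ->
  exists c d, In c points /\ In d points /\ maps_onto (Ttilde k) q (c, d).
Proof.
  pose proof inv_slope_between.
  assert (Hsinv : slope k * / slope k = 1) by (apply Rinv_r; unfold slope; lra).
  assert (Hshalf : slope k * (1/2) - 1 = k) by (unfold slope; lra).
  pose proof (delta_le_one k _ Hk Hkn 1 ltac:(lia)).
  pose proof (delta_le_one k _ Hk Hkn 2 ltac:(lia)).
  pose proof (delta_pos k 1 Hk); pose proof (delta_S k 1); pose proof (delta_S k 0).
  rewrite delta_0 in *.
  assert (Hin0 : In 0 points) by now left.
  assert (Hink : In k points) by (right; now left).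
  rewrite paper_partition_large, !in_app_iff.
  intros [Hq|[Hq|[<-|[]]]]; [repeat destruct Hq as [<-|Hq]; try contradiction| |].
  - exists (1 - delta k 1), 1.
    split; [apply orbit_point_in_large_points; lia|split; [exact one_in_large_points|]].
    apply Ttilde_onto_left_falling; lra.
  - exists 0, (1 - delta k 1).
    split; [exact Hin0|split; [apply orbit_point_in_large_points; lia|]].
    apply Ttilde_onto_left_falling; lra.
  - exists 0, k; split; [exact Hin0|split; [exact Hink|]].
    apply Ttilde_onto_left_rising; lra.
  - exists 0, k; split; [exact Hin0|split; [exact Hink|]].
    apply Ttilde_onto_right_falling; lra.
  - apply in_map_iff in Hq as [i [<- Hi]]; apply in_seq in Hi.
    exists (1 - delta k (S (S i))), (1 - delta k (S i)).
    split; [apply orbit_point_in_large_points; lia|].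
    split; [apply orbit_point_in_large_points; lia|].
    apply (Ttilde_onto_orbit_gap k _ Hk Hkn); lia.
  - exists (1 - delta k 2), 1.
    split; [apply orbit_point_in_large_points; lia|split; [exact one_in_large_points|]].
    apply Ttilde_onto_right_rising; lra.
Qed.

Lemma markov_paper_partition_large :
  markov_partition 0 1 (Ttilde k) (paper_partition (S (S m)) k).
Proof.
  apply markov_partition_of_points with (pts := points).
  - lra.
  - exact large_points_sorted.
  - now left.
  - exact one_in_large_points.
  - exact large_points_bounds.
  - exact paper_partition_large_perm_gaps.
  - exact Ttilde_maps_large_partition.
Qed.

End LargePartition.

Lemma markov_paper_partition n k : (1 <= n)%nat -> 0 < k < 1/2 -> (2 + 2 * k) ^ n * k = 1 ->
  markov_partition 0 1 (Ttilde k) (paper_partition n k).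
Proof.
  destruct n as [|[|m]]; intros Hn Hk Hkn; [lia| |].
  - exact (markov_paper_partition_one k Hk Hkn).
  - exact (markov_paper_partition_large k m (proj1 Hk) Hkn).
Qed.

Lemma length_paper_partition n k : (1 <= n)%nat -> length (paper_partition n k) = (n + 3)%nat.
Proof.
  destruct n as [|[|m]]; intros Hn; [lia|reflexivity|].
  unfold paper_partition; simpl.
  rewrite length_app, length_map, length_seq; simpl; lia.
Qed.

Theorem lemma15 :
  forall (n : nat), (1 <= n)%nat ->
  forall (k : R), 0 < k < 1/2 -> (2 + 2*k)^n * k = 1 ->
    is_markov 0 1 (Ttilde k) /\
    markov_partition 0 1 (Ttilde k) (paper_partition n k) /\
    length (paper_partition n k) = (n + 3)%nat.
Proof.
  intros n Hn k Hk Hkn.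
  pose proof (markov_paper_partition n k Hn Hk Hkn) as Hmarkov.
  split; [exists (paper_partition n k); exact Hmarkov|].
  split; [exact Hmarkov|exact (length_paper_partition n k Hn)].
Qed.
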